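(* Let $A,B\in\operatorname{Sym}(n,\mathbb{R})$ be linearly independent, form a non-dissipative pair, and satisfy $\operatorname{maxrank}\{A,B\}\ge3$. Then there exists $z\in\mathbb{R}^n$ with ${}^tzAz={}^tzBz=0$ such that $Az$ and $Bz$ are linearly independent (i.e. $\partial\Gamma_A$ and $\partial\Gamma_B$ intersect transversally at $z$).
   Context: $A,B$ form a non-dissipative pair if $0$ is the only positive semidefinite element of $\operatorname{span}_{\mathbb{R}}\{A,B\}$. $\operatorname{maxrank}\{A,B\}$ is the maximal rank of elements of $\operatorname{span}_{\mathbb{R}}\{A,B\}$. $\Gamma_M=\{z:{}^tzMz\le0\}$. *)

From mathcomp Require Import all_boot all_order all_algebra.
From mathcomp Require Import reals.
Set Implicit Arguments. Unset Strict Implicit. Unset Printing Implicit Defensive.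
Import Order.TTheory GRing.Theory Num.Theory.
Local Open Scope ring_scope.

Definition qform (R : realType) (n : nat) (M : 'M[R]_n) (z : 'cV[R]_n) : R :=
  (z^T *m M *m z) 0 0.

Definition symmetric_mx (R : realType) (n : nat) (M : 'M[R]_n) : Prop := M^T = M.

Definition psd (R : realType) (n : nat) (M : 'M[R]_n) : Prop :=
  symmetric_mx M /\ forall z : 'cV[R]_n, 0 <= qform M z.

Definition lin_indep2 (R : realType) (V : lmodType R) (u v : V) : Prop :=
  forall a b : R, a *: u + b *: v = 0 -> a = 0 /\ b = 0.

Definition non_dissipative (R : realType) (n : nat) (A B : 'M[R]_n) : Prop :=
  forall a b : R, psd (a *: A + b *: B) -> a *: A + b *: B = 0.

(* maxrank{A,B} : maximal rank of elements of span_R {A,B}, as a bound *)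
Definition maxrank_ge (R : realType) (n : nat) (A B : 'M[R]_n) (k : nat) : Prop :=
  exists a b : R, (k <= \rank (a *: A + b *: B))%N.

(* Write C, D for A, B.  Non-dissipativity says that no nonzero combination
   aC + bD is semidefinite; by Finsler's lemma D then takes both signs on the
   isotropic cone of C: D[x] > 0 > D[z] with C[x] = C[z] = 0.

   A common isotropic vector w with (Cw, Dw) <> (0, 0) lies on the line through
   x and z if b_C(x, z) = 0, and is otherwise found by the intermediate value
   theorem along a curve in the cone of C, unless C vanishes on the hyperplane
   (Cx)^perp.  Then b_C(y, y') = <h, y><g, y'> + <g, y><h, y'>, and either the
   line argument applies to a point of h^perp or g^perp, or D is positive
   semidefinite on h^perp and negative semidefinite on g^perp, so that C and D
   both vanish on h^perp /\ g^perp; the rank >= 3 hypothesis excludes this.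

   If Cw and Dw are dependent, aCw + bDw = 0, rotate the pencil to M = aC + bD,
   K = -bC + aD, so that Mw = 0 <> Kw.  For an M-isotropic u with Mu <> 0 and
   b_K(w, u) <> 0, the second point p where the line w + tu meets the cone of K
   is isotropic for M and K, and b_M(p, w) = 0 <> b_K(p, w) makes Mp and Kp
   independent.  Rotating back preserves all of this. *)

From mathcomp Require Import all_boot all_order all_algebra.
From mathcomp Require Import reals classical_sets.
From mathcomp Require Import ring lra.
From Stdlib Require Import Classical.
Import Order.TTheory GRing.Theory Num.Theory.
Set Implicit Arguments. Unset Strict Implicit. Unset Printing Implicit Defensive.
Local Open Scope ring_scope.

Section RealQuadratics.
Variable R : realType.
Implicit Types a b d m p q r : R.

Lemma mulrr_gt0 a : a != 0 -> 0 < a * a.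
Proof. by move=> a0; rewrite lt_def mulf_neq0 //= -expr2 sqr_ge0. Qed.

Lemma sqr_sum_gt0 a b : ~ (a = 0 /\ b = 0) -> 0 < a * a + b * b.
Proof.
move=> ab; have [a0|a0] := eqVneq a 0; last by have := mulrr_gt0 a0; nra.
have [b0|b0] := eqVneq b 0; first by case: ab.
by have := mulrr_gt0 b0; nra.
Qed.

Lemma quad_roots p m r : 0 < p -> r < 0 ->
  exists t1 t2, [/\ t1 < 0, 0 < t2, p + 2 * m * t1 + r * t1 * t1 = 0,
    p + 2 * m * t2 + r * t2 * t2 = 0 & r * t1 * t2 = p].
Proof.
move=> hp hr; have r0 : r != 0 by rewrite lt_eqF.
set s := Num.sqrt (m * m - p * r).
have ss : s * s = m * m - p * r by rewrite -expr2 sqr_sqrtr //; nra.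
have s0 : 0 <= s by apply: sqrtr_ge0.
have [sm smN] : m < s /\ - m < s by split; nra.
have rt e : r * ((e - m) / r) = e - m by rewrite mulrC divfK.
have root e : e * e = s * s ->
    p + 2 * m * ((e - m) / r) + r * ((e - m) / r) * ((e - m) / r) = 0.
  move=> es; apply: (mulfI r0); rewrite mulr0.
  transitivity (p * r + 2 * m * (r * ((e - m) / r)) +
    r * ((e - m) / r) * (r * ((e - m) / r))); first ring.
  by rewrite rt; nra.
have e1 := rt s; have e2 := rt (- s).
exists ((s - m) / r), ((- s - m) / r); split; [nra | nra | exact: root | | ].
- by apply: root; ring.
- apply: (mulfI r0); transitivity (r * ((s - m) / r) * (r * ((- s - m) / r))).
    by ring.
  by rewrite e1 e2; nra.
Qed.

Lemma quad_ge0_linear_coef d q : 0 <= q ->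
  (forall t, 0 <= 2 * t * d + t * t * q) -> d = 0.
Proof.
move=> q0 H; set u := 1 + q; have u0 : 0 < u by rewrite /u; lra.
set t := - d / u; have tu : t * u = - d by rewrite /t divfK // gt_eqF.
have : 0 <= (u * u) * (2 * t * d + t * t * q) by rewrite mulr_ge0 ?H //; nra.
have -> : (u * u) * (2 * t * d + t * t * q) = 2 * (t * u) * d * u + (t * u) * (t * u) * q.
  by ring.
by rewrite tu /u => h; nra.
Qed.

End RealQuadratics.

Section Rotation.
Variable R : realType.
Implicit Types a b c d : R.

Lemma scale_comb2 (V : lmodType R) c d a1 b1 a2 b2 (u v : V) :
  c *: (a1 *: u + b1 *: v) + d *: (a2 *: u + b2 *: v) =
  (c * a1 + d * a2) *: u + (c * b1 + d * b2) *: v.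
Proof. by rewrite !scalerDr !scalerA !scalerDl addrACA. Qed.

Lemma rot_eq0 (V : lmodType R) a b (u v : V) : ~ (a = 0 /\ b = 0) ->
  a *: u + b *: v = 0 -> - b *: u + a *: v = 0 -> u = 0 /\ v = 0.
Proof.
move=> ab e1 e2; have s0 := gt_eqF (sqr_sum_gt0 ab).
have comb c d : c *: (a *: u + b *: v) + d *: (- b *: u + a *: v) = 0.
  by rewrite e1 e2 !scaler0 addr0.
have eu : (a * a + b * b) *: u + 0 *: v = 0.
  by rewrite -(comb a (- b)) scale_comb2; congr (_ *: u + _ *: v); ring.
have ev : 0 *: u + (a * a + b * b) *: v = 0.
  by rewrite -(comb b a) scale_comb2; congr (_ *: u + _ *: v); ring.
move: eu ev; rewrite !scale0r addr0 add0r => /eqP + /eqP.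
by rewrite !scaler_eq0 s0 => /eqP -> /eqP ->.
Qed.

Lemma lin_indep2_rot (V : lmodType R) a b (u v : V) : ~ (a = 0 /\ b = 0) ->
  lin_indep2 (a *: u + b *: v) (- b *: u + a *: v) -> lin_indep2 u v.
Proof.
move=> ab H c d e.
have [e1 e2] : a * c + b * d = 0 /\ - b * c + a * d = 0.
  apply: H; rewrite scale_comb2 -(scaler0 _ (a * a + b * b)) -e scalerDr !scalerA.
  by congr (_ *: u + _ *: v); ring.
exact: (@rot_eq0 R^o a b c d ab e1 e2).
Qed.

End Rotation.

Section Pencils.
Variables (R : realType) (n : nat).
Implicit Types (M C D K : 'M[R]_n) (h g u v w x y z : 'cV[R]_n).

Definition bform M x y : R := (x^T *m M *m y) 0 0.
Definition vdot x y : R := (x^T *m y) 0 0.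

Lemma qformE M z : qform M z = bform M z z. Proof. by []. Qed.

Lemma bformDl M x y z : bform M (x + y) z = bform M x z + bform M y z.
Proof. by rewrite /bform raddfD /= !mulmxDl mxE. Qed.

Lemma bformDr M x y z : bform M z (x + y) = bform M z x + bform M z y.
Proof. by rewrite /bform !mulmxDr mxE. Qed.

Lemma bformZl M a x z : bform M (a *: x) z = a * bform M x z.
Proof. by rewrite /bform linearZ /= -!scalemxAl mxE. Qed.

Lemma bformZr M a x z : bform M z (a *: x) = a * bform M z x.
Proof. by rewrite /bform -!scalemxAr mxE. Qed.

Lemma bform_addm M K x z : bform (M + K) x z = bform M x z + bform K x z.
Proof. by rewrite /bform mulmxDr mulmxDl mxE. Qed.

Lemma bform_scalem M a x z : bform (a *: M) x z = a * bform M x z.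
Proof. by rewrite /bform -scalemxAr -scalemxAl mxE. Qed.

Lemma bform_oppm M x z : bform (- M) x z = - bform M x z.
Proof. by rewrite /bform mulmxN mulNmx mxE. Qed.

Lemma bformC M x y : M^T = M -> bform M x y = bform M y x.
Proof.
move=> sM; rewrite /bform -[in LHS](trmxK (x^T *m M *m y)) mxE.
by rewrite !trmx_mul trmxK sM mulmxA.
Qed.

Lemma vdotC x y : vdot x y = vdot y x.
Proof. by rewrite /vdot -[in LHS](trmxK (x^T *m y)) mxE trmx_mul trmxK. Qed.

Lemma vdotDr h x y : vdot h (x + y) = vdot h x + vdot h y.
Proof. by rewrite /vdot mulmxDr mxE. Qed.

Lemma vdotZr h a x : vdot h (a *: x) = a * vdot h x.
Proof. by rewrite /vdot -scalemxAr mxE. Qed.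

Lemma vdotDl h x y : vdot (x + y) h = vdot x h + vdot y h.
Proof. by rewrite vdotC vdotDr !(vdotC h). Qed.

Lemma vdotZl h a x : vdot (a *: x) h = a * vdot x h.
Proof. by rewrite vdotC vdotZr vdotC. Qed.

Lemma vdotNr h x : vdot h (- x) = - vdot h x.
Proof. by rewrite /vdot mulmxN mxE. Qed.

Lemma vdotNl h x : vdot (- x) h = - vdot x h.
Proof. by rewrite vdotC vdotNr vdotC. Qed.

Lemma vdot0r h : vdot h 0 = 0.
Proof. by rewrite /vdot mulmx0 mxE. Qed.

Lemma vdotvv_gt0 h : h != 0 -> 0 < vdot h h.
Proof.
move=> hn0.
have [i hi] : exists i, h i 0 != 0.
  apply/existsP; apply: contraNT hn0 => /existsPn h0.
  by apply/eqP/matrixP => i j; rewrite (ord1 j) mxE; apply/eqP/negPn.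
rewrite /vdot mxE (bigD1 i) //= mxE ltr_pwDl ?mulrr_gt0 //.
by apply: sumr_ge0 => k _; rewrite mxE -expr2 sqr_ge0.
Qed.

Lemma bformE M x y : bform M x y = vdot x (M *m y).
Proof. by rewrite /bform /vdot mulmxA. Qed.

Lemma bform_mull M x y : M^T = M -> bform M x y = vdot (M *m x) y.
Proof. by move=> sM; rewrite bformC // bformE vdotC. Qed.

Lemma bform_kerr M x y : M *m x = 0 -> bform M y x = 0.
Proof. by move=> Mx; rewrite bformE Mx vdot0r. Qed.

Lemma bform_kerl M x y : M^T = M -> M *m x = 0 -> bform M x y = 0.
Proof. by move=> sM Mx; rewrite bformC // bform_kerr. Qed.

Lemma mulmx_neq0_bform M x y : M^T = M -> bform M x y != 0 -> M *m x != 0.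
Proof. by move=> sM; apply: contra => /eqP Mx; rewrite bform_kerl. Qed.

Lemma bform_eq0_ker M x : M^T = M -> (forall y, bform M x y = 0) -> M *m x = 0.
Proof.
move=> sM H; apply/eqP; apply: contraT => Mx.
by have := vdotvv_gt0 Mx; rewrite -bform_mull // H ltxx.
Qed.

Lemma qform_comb M a b x y : M^T = M ->
  qform M (a *: x + b *: y) =
  a * a * qform M x + 2 * a * b * bform M x y + b * b * qform M y.
Proof.
by move=> sM; rewrite !qformE bformDl !bformDr !bformZl !bformZr (bformC y x sM); ring.
Qed.

Lemma qformN M z : qform (- M) z = - qform M z.
Proof. exact: bform_oppm. Qed.

Lemma sym_oppmx M : M^T = M -> (- M)^T = - M.
Proof. by move=> sM; rewrite linearN /= sM. Qed.

Lemma qform_pencil C D a b z :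
  qform (a *: C + b *: D) z = a * qform C z + b * qform D z.
Proof. by rewrite !qformE bform_addm !bform_scalem. Qed.

Lemma pencil_sym C D a b : C^T = C -> D^T = D ->
  (a *: C + b *: D)^T = a *: C + b *: D.
Proof. by move=> sC sD; rewrite raddfD /= !linearZ /= sC sD. Qed.

Lemma mulmx_pencil C D a b x :
  (a *: C + b *: D) *m x = a *: (C *m x) + b *: (D *m x).
Proof. by rewrite mulmxDl -!scalemxAl. Qed.

Lemma exists_vdot_neq0 h g : h != 0 -> g != 0 ->
  exists x, vdot h x != 0 /\ vdot g x != 0.
Proof.
move=> h0 g0; have [hg|hg] := eqVneq (vdot g h) 0; last first.
  by exists h; rewrite hg gt_eqF ?vdotvv_gt0.
exists (h + g); rewrite !vdotDr (vdotC h g) hg add0r addr0.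
by rewrite !gt_eqF ?vdotvv_gt0.
Qed.

(** * Finsler's lemma *)

Lemma finsler_cross C D x y :
  C^T = C -> D^T = D -> (forall z, qform C z = 0 -> 0 <= qform D z) ->
  0 < qform C x -> qform C y < 0 ->
  0 <= qform D x * (- qform C y) + qform D y * qform C x.
Proof.
move=> sC sD H hx hy.
have [t1 [t2 [t1n t2p r1 r2 pr]]] := quad_roots (bform C x y) hx hy.
have Dt t : qform C x + 2 * bform C x y * t + qform C y * t * t = 0 ->
    0 <= qform D x + 2 * t * bform D x y + t * t * qform D y.
  move=> ht; have := H (1 *: x + t *: y); rewrite !qform_comb //.
  have -> : 1 * 1 * qform C x + 2 * 1 * t * bform C x y + t * t * qform C y = 0.
    by rewrite -ht; ring.
  by move/(_ erefl); congr (0 <= _); ring.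
have D1 := Dt _ r1; have D2 := Dt _ r2.
set d1 := qform D x in D1 D2 *; set d2 := qform D y in D1 D2 *.
set e := bform D x y in D1 D2.
set p := qform C x in pr hx *; set r := qform C y in pr hy *.
(* Eliminate the cross term [e] between the two inequalities at [t1 < 0 < t2]. *)
have X : 0 <= (t2 - t1) * (d1 - d2 * t1 * t2).
  have -> : (t2 - t1) * (d1 - d2 * t1 * t2) =
     t2 * (d1 + 2 * t1 * e + t1 * t1 * d2) - t1 * (d1 + 2 * t2 * e + t2 * t2 * d2).
    by ring.
  nra.
have Y : 0 <= d1 - d2 * t1 * t2 by rewrite pmulr_rge0 in X; lra.
rewrite -pr; nra.
Qed.

Local Open Scope classical_set_scope.

Lemma finsler C D u v :
  C^T = C -> D^T = D -> (forall z, qform C z = 0 -> 0 <= qform D z) ->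
  0 < qform C u -> qform C v < 0 ->
  exists l : R, forall z, 0 <= qform D z + l * qform C z.
Proof.
move=> sC sD H hu hv.
pose E := [set r : R | exists x, 0 < qform C x /\ r = - qform D x / qform C x].
have E_le y : qform C y < 0 -> ubound E (- qform D y / qform C y).
  move=> hy r [x [hx ->]]; have := finsler_cross sC sD H hx hy.
  by rewrite ler_pdivrMr // mulrAC ler_ndivlMr //; lra.
have hE : has_sup E.
  by split; [exists (- qform D u / qform C u), u | exists (- qform D v / qform C v); exact: E_le].
exists (sup E) => z.
have [hz|hz|hz] := ltgtP (qform C z) 0.
- have : sup E <= - qform D z / qform C z by apply: ge_sup; [case: hE | exact: E_le].
  by rewrite ler_ndivlMr //; lra.
- have : - qform D z / qform C z <= sup E by apply: sup_upper_bound => //; exists z.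
  by rewrite ler_pdivrMr //; lra.
- by rewrite hz mulr0 addr0; apply: H.
Qed.

Local Close Scope classical_set_scope.

Definition indefinite_pencil C D := forall a b : R,
  (forall z, 0 <= a * qform C z + b * qform D z) -> a = 0 /\ b = 0.

Lemma indefinite_pencil_lt0 C D a b : indefinite_pencil C D -> ~ (a = 0 /\ b = 0) ->
  exists z, a * qform C z + b * qform D z < 0.
Proof.
move=> H ab; apply: NNPP => Hn; apply: ab; apply: H => z.
by rewrite leNgt; apply/negP => hz; apply: Hn; exists z.
Qed.

Lemma indefinite_pencilN C D : indefinite_pencil C D -> indefinite_pencil C (- D).
Proof.
move=> H a b hz; have [-> b0] : a = 0 /\ - b = 0.
  by apply: H => z; have := hz z; rewrite qformN mulrN mulNr.
by split => //; rewrite -[b]opprK b0 oppr0.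
Qed.

Lemma indefinite_pencil_signs C D : indefinite_pencil C D ->
  exists u v, 0 < qform C u /\ qform C v < 0.
Proof.
move=> H; have [u hu] : exists u, -1 * qform C u + 0 * qform D u < 0.
  by apply: (indefinite_pencil_lt0 H); case=> /eqP; rewrite oppr_eq0 oner_eq0.
have [v hv] : exists v, 1 * qform C v + 0 * qform D v < 0.
  by apply: (indefinite_pencil_lt0 H); case=> /eqP; rewrite oner_eq0.
by exists u, v; split; lra.
Qed.

Lemma exists_isotropic_pos C D : C^T = C -> D^T = D -> indefinite_pencil C D ->
  exists x, qform C x = 0 /\ 0 < qform D x.
Proof.
move=> sC sD H; have [u [v [hu hv]]] := indefinite_pencil_signs H.
apply: NNPP => Hn.
have sND := sym_oppmx sD.
have [|l hl] := finsler sC sND _ hu hv.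
  move=> z Cz; rewrite qformN oppr_ge0 leNgt; apply/negP => Dz.
  by apply: Hn; exists z.
have [_ /eqP] : l = 0 /\ (-1 : R) = 0.
  by apply: H => z; have := hl z; rewrite qformN; lra.
by rewrite oppr_eq0 oner_eq0.
Qed.

(** * Transversal points *)

Definition common_isotropic C D x :=
  [/\ qform C x = 0, qform D x = 0 & (C *m x != 0) || (D *m x != 0)].

Definition transversal_at C D p :=
  [/\ qform C p = 0, qform D p = 0 & lin_indep2 (C *m p) (D *m p)].

(* Given [qform M x = 0], this is (a multiple of) the second point where the
   line [x + t v] meets the isotropic cone of [M]. *)
Definition cone_secant M x v := qform M v *: x + (-2 * bform M x v) *: v.

Lemma qform_cone_secant M x v : M^T = M -> qform M x = 0 ->
  qform M (cone_secant M x v) = 0.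
Proof. by move=> sM Mx; rewrite qform_comb // Mx; ring. Qed.

Lemma bform_cone_secant M x v : M^T = M -> qform M x = 0 ->
  bform M (cone_secant M x v) x = -2 * (bform M x v * bform M x v).
Proof. by move=> sM Mx; rewrite bformDl !bformZl -qformE Mx (bformC v x sM); ring. Qed.

Lemma bform_cone_secant_neq0 M x v : M^T = M -> qform M x = 0 ->
  bform M x v != 0 -> bform M (cone_secant M x v) x != 0.
Proof.
move=> sM Mx b0.
by rewrite bform_cone_secant // mulf_neq0 ?oppr_eq0 ?pnatr_eq0 ?gt_eqF ?mulrr_gt0.
Qed.

Lemma cone_secant_neq0 M x v : M^T = M -> qform M x = 0 -> bform M x v != 0 ->
  M *m cone_secant M x v != 0.
Proof. by move=> sM Mx b0; rewrite (mulmx_neq0_bform (y := x) sM) ?bform_cone_secant_neq0. Qed.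

Lemma vdot_cone_secant M x v h : vdot h x = 0 ->
  vdot h (cone_secant M x v) = -2 * bform M x v * vdot h v.
Proof. by move=> hx; rewrite vdotDr !vdotZr hx; ring. Qed.

Lemma exists_isotropic_off_hyperplane M u v h : M^T = M ->
  0 < qform M u -> qform M v < 0 -> h != 0 ->
  exists w, [/\ qform M w = 0, M *m w != 0 & vdot h w != 0].
Proof.
move=> sM hu hv h0.
have [t [_ [_ _ ht _ _]]] := quad_roots (bform M u v) hu hv.
set w0 := 1 *: u + t *: v.
have q0 : qform M w0 = 0 by rewrite qform_comb // -ht; ring.
have Mw0 : M *m w0 != 0.
  apply/eqP => Mw0; have := bform_kerl u sM Mw0; have := bform_kerl v sM Mw0.
  rewrite !bformDl !bformZl -!qformE (bformC v u sM) => e1 e2; clear -e1 e2 hu hv; nra.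
have [hw0|hw0] := eqVneq (vdot h w0) 0; last by exists w0.
have [x [hx Mx]] := exists_vdot_neq0 h0 Mw0.
have c0 : bform M w0 x != 0 by rewrite bform_mull.
exists (cone_secant M w0 x); split.
- exact: qform_cone_secant.
- exact: cone_secant_neq0.
- by rewrite vdot_cone_secant // !mulf_neq0 ?oppr_eq0 ?pnatr_eq0.
Qed.

Lemma lin_indep2_of_bform M K p y : M^T = M -> K^T = K ->
  bform M p y = 0 -> bform K p y != 0 -> M *m p != 0 ->
  lin_indep2 (M *m p) (K *m p).
Proof.
move=> sM sK My Ky Mp a b e.
have : vdot y (a *: (M *m p) + b *: (K *m p)) = 0 by rewrite e vdot0r.
rewrite vdotDr !vdotZr -!bformE (bformC y p sM) (bformC y p sK) My mulr0 add0r.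
move=> /eqP; rewrite mulf_eq0 (negPf Ky) orbF => /eqP b0; subst b.
by move/eqP: e; rewrite scale0r addr0 scaler_eq0 (negPf Mp) orbF => /eqP.
Qed.

Lemma exists_transversal_of_kernel M K u v x : M^T = M -> K^T = K ->
  0 < qform M u -> qform M v < 0 ->
  M *m x = 0 -> qform K x = 0 -> K *m x != 0 ->
  exists p, transversal_at M K p.
Proof.
move=> sM sK hu hv Mx Kx0 Kx.
have [w [Mw0 Mw Kxw]] := exists_isotropic_off_hyperplane sM hu hv Kx.
have b0 : bform K x w != 0 by rewrite bform_mull.
exists (cone_secant K x w); split.
- by rewrite qform_comb // Mw0 (qformE M x) !(bform_kerl _ sM Mx); ring.
- exact: qform_cone_secant.
- apply: (lin_indep2_of_bform (y := x)) => //.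
  + exact: bform_kerr.
  + exact: bform_cone_secant_neq0.
  + rewrite mulmxDr -!scalemxAr Mx scaler0 add0r scaler_eq0 negb_or Mw andbT.
    by rewrite mulf_neq0 ?oppr_eq0 ?pnatr_eq0.
Qed.

Lemma transversal_at_rot C D a b p :
  ~ (a = 0 /\ b = 0) -> transversal_at (a *: C + b *: D) (- b *: C + a *: D) p ->
  transversal_at C D p.
Proof.
move=> ab []; rewrite !qform_pencil !mulmx_pencil => e1 e2 ind.
have [Cp Dp] := @rot_eq0 R R^o a b _ _ ab e1 e2.
by split => //; apply: lin_indep2_rot ind.
Qed.

Lemma exists_transversal C D x :
  C^T = C -> D^T = D -> indefinite_pencil C D ->
  common_isotropic C D x -> exists p, transversal_at C D p.
Proof.
move=> sC sD nd [Cx Dx nz].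
have [ind|dep] := classic (lin_indep2 (C *m x) (D *m x)); first by exists x.
have [a [b [e ab]]] : exists a b : R,
    a *: (C *m x) + b *: (D *m x) = 0 /\ ~ (a = 0 /\ b = 0).
  apply: NNPP => H; apply: dep => a b e; apply: NNPP => ab.
  by apply: H; exists a, b.
set M := a *: C + b *: D; set K := - b *: C + a *: D.
have Mx : M *m x = 0 by rewrite mulmx_pencil.
have Kx0 : qform K x = 0 by rewrite qform_pencil Cx Dx; ring.
have Kx : K *m x != 0.
  rewrite mulmx_pencil; apply/eqP => Kx.
  by have [C0 D0] := rot_eq0 ab e Kx; move: nz; rewrite C0 D0 eqxx.
have nab : ~ (- a = 0 /\ - b = 0).
  by case=> /eqP + /eqP; rewrite !oppr_eq0 => /eqP a0 /eqP b0; apply: ab.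
have [u hu] := indefinite_pencil_lt0 nd nab.
have [v hv] := indefinite_pencil_lt0 nd ab.
have sM : M^T = M by apply: pencil_sym.
have sK : K^T = K by apply: pencil_sym.
have hu' : 0 < qform M u by rewrite qform_pencil; lra.
have hv' : qform M v < 0 by rewrite qform_pencil.
have [p Hp] := exists_transversal_of_kernel sM sK hu' hv' Mx Kx0 Kx.
by exists p; apply: transversal_at_rot ab Hp.
Qed.

(** * Common isotropic vectors *)

Lemma exists_common_isotropic_orth C D x z :
  C^T = C -> D^T = D -> qform C x = 0 -> 0 < qform D x ->
  qform C z = 0 -> qform D z < 0 -> bform C x z = 0 ->
  exists y, common_isotropic C D y.
Proof.
move=> sC sD Cx Dx Cz Dz Cxz.
have [t1 [t2 [t1n t2p r1 r2 _]]] := quad_roots (bform D x z) Dx Dz.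
have Ct t : qform C (1 *: x + t *: z) = 0 by rewrite qform_comb // Cx Cz Cxz; ring.
have Dt t : qform D x + 2 * bform D x z * t + qform D z * t * t = 0 ->
    qform D (1 *: x + t *: z) = 0 by move=> ht; rewrite qform_comb // -ht; ring.
have [D1|D1] := eqVneq (D *m (1 *: x + t1 *: z)) 0; last first.
  by exists (1 *: x + t1 *: z); split; rewrite ?Dt ?D1 ?orbT.
exists (1 *: x + t2 *: z); split; rewrite ?Dt //; apply/orP; right.
apply: contraTneq Dz => D2.
have : (t2 - t1) *: (D *m z) = D *m (1 *: x + t2 *: z) - D *m (1 *: x + t1 *: z).
  by rewrite !mulmxDr -!scalemxAr scalerBl opprD addrACA subrr add0r.
rewrite D1 D2 subrr => /eqP; rewrite scaler_eq0 subr_eq0 => /orP[/eqP t12|/eqP Dz0].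
  by move: t1n; rewrite -t12 ltNge (ltW t2p).
by rewrite -leNgt qformE bform_kerl.
Qed.

(* Evaluated at [s], these are [qform C ((1 - s) *: z + s *: y)] and
   [bform C x ((1 - s) *: z + s *: y)]. *)
Definition qform_seg_poly C z y : {poly R} :=
  (qform C z)%:P * (1%:P - 'X) ^+ 2 + (2 * bform C z y)%:P * ((1%:P - 'X) * 'X) +
  (qform C y)%:P * 'X ^+ 2.

Definition bform_seg_poly C x z y : {poly R} :=
  (bform C x z)%:P * (1%:P - 'X) + (bform C x y)%:P * 'X.

Lemma exists_common_isotropic_segment C D x z y :
  C^T = C -> D^T = D -> qform C x = 0 -> 0 < qform D x ->
  qform C z = 0 -> qform D z < 0 -> bform C x z != 0 ->
  bform C x y = 0 -> qform C y != 0 ->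
  exists w, common_isotropic C D w.
Proof.
move=> sC sD Cx Dx Cz Dz Cxz Cxy Cy.
pose v s := (1 - s) *: z + s *: y.
pose a := qform_seg_poly C z y; pose b := -2%:P * bform_seg_poly C x z y.
pose G := a ^+ 2 * (qform D x)%:P + 2%:P * a * b * bform_seg_poly D x z y +
  b ^+ 2 * qform_seg_poly D z y.
have GE s : G.[s] = qform D (cone_secant C x (v s)).
  rewrite /v !qform_comb // !bformDr !bformZr.
  by rewrite !(hornerD, hornerM, horner_exp, hornerN, hornerC, hornerX); ring.
have v0 : v 0 = z by rewrite /v subr0 scale1r scale0r addr0.
have v1 : v 1 = y by rewrite /v subrr scale0r scale1r add0r.
have G0 : G.[0] <= 0.
  rewrite GE v0 qform_comb // Cz.
  by have := mulrr_gt0 Cxz; nra.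
have G1 : 0 < G.[1].
  rewrite GE v1 qform_comb // Cxy.
  by have := mulrr_gt0 Cy; nra.
have [s /andP[s0 s1] /rootP Gs] : exists2 s, 0 <= s <= 1 & root G s.
  by apply: poly_ivt; rewrite ?ler01 ?G0 ?ltW.
have Cxv : bform C x (v s) = (1 - s) * bform C x z.
  by rewrite /v bformDr !bformZr Cxy; ring.
exists (cone_secant C x (v s)); split.
- exact: qform_cone_secant.
- by rewrite -GE.
- rewrite cone_secant_neq0 // Cxv mulf_neq0 // subr_eq0.
  by apply/eqP => e; move/eqP: Gs; rewrite -e gt_eqF.
Qed.

Lemma bform_null_hyperplane C h x y : C^T = C ->
  (forall y, vdot h y = 0 -> qform C y = 0) ->
  vdot h x = 0 -> vdot h y = 0 -> bform C x y = 0.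
Proof.
move=> sC H hx hy; have := H (x + y); rewrite vdotDr hx hy addr0 => /(_ erefl).
rewrite qformE bformDl !bformDr -!qformE (H x hx) (H y hy) (bformC y x sC).
rewrite add0r addr0 -mulr2n -mulr_natl => /eqP.
by rewrite mulf_eq0 pnatr_eq0 => /eqP.
Qed.

Lemma null_hyperplane_bform C h : C^T = C -> h != 0 ->
  (forall y, vdot h y = 0 -> qform C y = 0) ->
  exists g, forall y z, bform C y z = vdot h y * vdot g z + vdot g y * vdot h z.
Proof.
move=> sC h0 H; set hh := vdot h h; have hh0 : hh != 0 by rewrite gt_eqF ?vdotvv_gt0.
set k := C *m h; set c := qform C h / (hh * hh).
exists (hh^-1 *: k - (c / 2) *: h) => y z.
have dec y0 : exists a, exists2 p0, vdot h p0 = 0 & y0 = p0 + a *: h.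
  exists (vdot h y0 / hh), (y0 - (vdot h y0 / hh) *: h); last by rewrite subrK.
  by rewrite vdotDr vdotNr vdotZr -/hh divfK // subrr.
have [a [py hpy ->]] := dec y; have [b [pz hpz ->]] := dec z.
rewrite bformDl !bformDr !bformZl !bformZr (bform_null_hyperplane sC H hpy hpz).
rewrite (bformE C py h) (bform_mull h pz sC) -qformE -/k (vdotC py k).
rewrite !(vdotDl, vdotDr, vdotZl, vdotZr, vdotNl, vdotNr) hpy hpz -/hh (vdotC k h).
rewrite /c qformE bformE -/k.
by field.
Qed.

Lemma psd_isotropic_orth D h w e : D^T = D ->
  (forall y, vdot h y = 0 -> 0 <= qform D y) ->
  vdot h w = 0 -> qform D w = 0 -> vdot h e = 0 -> bform D w e = 0.
Proof.
move=> sD H hw Dw he; apply: (quad_ge0_linear_coef (H e he)) => t.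
have := H (1 *: w + t *: e); rewrite vdotDr !vdotZr hw he !mulr0 addr0.
by rewrite qform_comb // Dw => /(_ erefl); congr (0 <= _); ring.
Qed.

Lemma semidefinite_hyperplanes_ker D h g z w : D^T = D ->
  (forall y, vdot h y = 0 -> 0 <= qform D y) ->
  (forall y, vdot g y = 0 -> qform D y <= 0) ->
  vdot h z != 0 -> vdot g z = 0 -> vdot h w = 0 -> vdot g w = 0 -> D *m w = 0.
Proof.
move=> sD Hh Hg hz gz hw gw.
have Dw : qform D w = 0 by apply/eqP; rewrite eq_le Hg // Hh.
have sND := sym_oppmx sD.
have HgN y : vdot g y = 0 -> 0 <= qform (- D) y by rewrite qformN oppr_ge0; apply: Hg.
have Dwz : bform D w z = 0.
  apply/eqP; rewrite -oppr_eq0 -bform_oppm; apply/eqP.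
  by apply: (psd_isotropic_orth sND HgN) => //; rewrite qformN Dw oppr0.
apply: bform_eq0_ker => // v; set t := vdot h v / vdot h z.
have -> : v = (v - t *: z) + t *: z by rewrite subrK.
rewrite bformDr bformZr Dwz mulr0 addr0.
by apply: (psd_isotropic_orth sD Hh) => //; rewrite vdotDr vdotNr vdotZr /t divfK // subrr.
Qed.

Definition pencil_nonzero_codim2 C D := forall h g, exists w,
  [/\ vdot h w = 0, vdot g w = 0 & (C *m w != 0) || (D *m w != 0)].

Lemma exists_common_isotropic_nonorth C D x z : C^T = C -> D^T = D ->
  pencil_nonzero_codim2 C D ->
  qform C x = 0 -> 0 < qform D x -> qform C z = 0 -> qform D z < 0 ->
  bform C x z != 0 -> exists w, common_isotropic C D w.
Proof.
move=> sC sD PK Cx Dx Cz Dz Cxz.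
have [[y [Cxy Cy]]|Hy] := classic (exists y, bform C x y = 0 /\ qform C y != 0).
  exact: exists_common_isotropic_segment sC sD Cx Dx Cz Dz Cxz Cxy Cy.
set h := C *m x; have h0 : h != 0 := mulmx_neq0_bform sC Cxz.
have [g Cg] : exists g, forall y z,
    bform C y z = vdot h y * vdot g z + vdot g y * vdot h z.
  apply: null_hyperplane_bform => // y hy; apply: NNPP => Cy.
  by apply: Hy; exists y; split; [rewrite bform_mull | apply/eqP].
have CE v : qform C v = 2 * (vdot h v * vdot g v) by rewrite qformE Cg; ring.
have hz : vdot h z != 0 by rewrite -bform_mull.
have gz : vdot g z = 0.
  by move/eqP: Cz; rewrite CE !mulf_eq0 pnatr_eq0 (negPf hz) => /eqP.
have [[w [hw Dw]]|HA] := classic (exists w, vdot h w = 0 /\ qform D w < 0).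
  apply: (exists_common_isotropic_orth sC sD Cx Dx _ Dw); last by rewrite bform_mull.
  by rewrite CE hw mul0r mulr0.
have [[w [gw Dw]]|HB] := classic (exists w, vdot g w = 0 /\ 0 < qform D w).
  apply: (exists_common_isotropic_orth sC sD _ Dw Cz Dz); last by rewrite Cg gw gz; ring.
  by rewrite CE gw mulr0 mulr0.
have [w [hw gw]] := PK h g.
have -> : C *m w = 0 by apply: bform_eq0_ker => // v; rewrite Cg hw gw; ring.
suff -> : D *m w = 0 by rewrite eqxx.
apply: (semidefinite_hyperplanes_ker sD _ _ hz gz hw gw) => y hy; rewrite leNgt.
  by apply/negP => Dy; apply: HA; exists y.
by apply/negP => Dy; apply: HB; exists y.
Qed.

Lemma exists_common_isotropic C D : C^T = C -> D^T = D ->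
  indefinite_pencil C D -> pencil_nonzero_codim2 C D ->
  exists x, common_isotropic C D x.
Proof.
move=> sC sD nd PK.
have [x [Cx Dx]] := exists_isotropic_pos sC sD nd.
have sND := sym_oppmx sD.
have [z [Cz]] := exists_isotropic_pos sC sND (indefinite_pencilN nd).
rewrite qformN oppr_gt0 => Dz.
have [Cxz|Cxz] := eqVneq (bform C x z) 0.
  exact: exists_common_isotropic_orth sC sD Cx Dx Cz Dz Cxz.
exact: exists_common_isotropic_nonorth sC sD PK Cx Dx Cz Dz Cxz.
Qed.

Lemma submx_orth2 (X : 'M[R]_n) h g :
  (forall w, vdot h w = 0 -> vdot g w = 0 -> X *m w = 0) ->
  (X <= col_mx h^T g^T)%MS.
Proof.
move=> H; rewrite submxE; apply/eqP/matrixP => i j.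
set K := cokermx (col_mx h^T g^T).
have /eqP : col_mx (h^T *m K) (g^T *m K) = 0 by rewrite -mul_col_mx mulmx_coker.
rewrite col_mx_eq0 => /andP[/eqP hK /eqP gK].
have colK m (Y : 'M[R]_(m, n)) : Y *m col j K = col j (Y *m K).
  by rewrite !colE mulmxA.
have XK : X *m col j K = 0 by apply: H; rewrite /vdot colK ?hK ?gK !mxE.
by have := congr1 (fun m : 'cV[R]_n => m i 0) XK; rewrite colK !mxE.
Qed.

Lemma pencil_nonzero_codim2_of_rank C D a b :
  (3 <= \rank (a *: C + b *: D))%N -> pencil_nonzero_codim2 C D.
Proof.
move=> rk h g; apply: NNPP => Hn; move: rk; apply/negP; rewrite -ltnNge ltnS.
apply: leq_trans (mxrankS _) (rank_leq_row (col_mx h^T g^T)).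
have CD w : vdot h w = 0 -> vdot g w = 0 -> C *m w = 0 /\ D *m w = 0.
  move=> hw gw; split; apply/eqP; apply/negPn/negP => Xw;
    by apply: Hn; exists w; rewrite Xw ?orbT.
by rewrite addsmx_sub !scalemx_sub // submx_orth2 // => w hw gw; case: (CD w hw gw).
Qed.

Lemma indefinite_pencil_of_nondissipative C D : C^T = C -> D^T = D ->
  lin_indep2 C D -> non_dissipative C D -> indefinite_pencil C D.
Proof.
move=> sC sD ind nd a b hz; apply: ind; apply: nd; split; first exact: pencil_sym.
by move=> z; rewrite qform_pencil.
Qed.

End Pencils.

Unset Implicit Arguments.
Theorem theorem2p9 (R : realType) (n : nat) (A B : 'M[R]_n) :
  symmetric_mx A -> symmetric_mx B ->
  lin_indep2 A B ->
  non_dissipative A B ->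
  maxrank_ge A B 3 ->
  exists z : 'cV[R]_n,
    qform A z = 0 /\ qform B z = 0 /\ lin_indep2 (A *m z) (B *m z).
Proof.
move=> sA sB ind nd [a [b rk]].
have indef := indefinite_pencil_of_nondissipative sA sB ind nd.
have [x iso] := exists_common_isotropic sA sB indef (pencil_nonzero_codim2_of_rank rk).
by have [p [Ap Bp indp]] := exists_transversal sA sB indef iso; exists p.
Qed.
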